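(* Let $n,k$ be positive integers with $n\ge k$. The integer $|u(n,k)|$ is the number of ordered pairs $(\sigma,\tau)$ of permutations of $[n]=\{1,\dots,n\}$, each having $k$ cycles, such that $\min(\sigma)=\min(\tau)$.
   Context: The central factorial numbers of the first kind with even indices $u(n,k)=t(2n,2k)$ satisfy $u(0,0)=1$, $u(n,k)=0$ if $k\notin\{1,\dots,n\}$ (for $(n,k)\ne(0,0)$), and $u(n,k)=u(n-1,k-1)-(n-1)^2u(n-1,k)$ for $n,k\ge1$; equivalently $\prod_{i=0}^{n-1}(x-i^2)=\sum_k u(n,k)x^k$. For a permutation $\sigma$ of $[n]$, $\min(\sigma)$ denotes the set of cyclic minima, i.e. the set of minimal elements of the cycles of $\sigma$. *)

From mathcomp Require Import all_boot all_order all_algebra all_fingroup.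
Set Implicit Arguments. Unset Strict Implicit. Unset Printing Implicit Defensive.
Import GRing.Theory Num.Theory.
Local Open Scope ring_scope.

(* Central factorial numbers with even indices: u n k = t(2n,2k).
   u(0,0)=1, u(0,k)=0 for k>=1, u(n,0)=0 for n>=1,
   u(n,k) = u(n-1,k-1) - (n-1)^2 u(n-1,k). *)
Fixpoint cfu (n k : nat) : int :=
  match n with
  | 0 => (k == 0%N)%:Z
  | n'.+1 => match k with
             | 0 => 0
             | k'.+1 => cfu n' k' - ((n' ^ 2)%N)%:Z * cfu n' k
             end
  end.

Definition cycmin (n : nat) (s : {perm 'I_n}) : {set 'I_n} :=
  [set x : 'I_n | [forall y in porbit s x, (x <= y)%N]].

Definition ncycles (n : nat) (s : {perm 'I_n}) : nat := #|porbits s|.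

From mathcomp Require Import all_boot all_order all_algebra all_fingroup.
From mathcomp Require Import zify.
Set Implicit Arguments. Unset Strict Implicit. Unset Printing Implicit Defensive.
Local Open Scope group_scope.

(* Over 'I_n = {0, ..., n-1}, the k-th coefficient of prod_(i < n) (X - i^2)
   is u(n, k), so |u(n, k)| = sum over k-subsets S of prod_(i not in S) i^2.
   On the combinatorial side a permutation has as many cycles as cyclic
   minima, and exactly prod_(i not in S) i permutations have S as set of
   cyclic minima: inserting the elements 0, 1, ..., n-1 one at a time, an
   element of S opens a new cycle while any other element i is put right
   after one of the i elements already placed.  Squaring and summing over S
   counts the pairs. *)

Section Perm.
Variable T : finType.
Implicit Types (s : {perm T}) (A : {set T}) (x y i a : T).

Lemma perm_onP A s : reflect (forall y, y \notin A -> s y = y) (perm_on A s).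
Proof.
apply: (iffP subsetP) => [on y|fixA y]; first by apply: contraNeq; apply: on.
by apply: contraR => /fixA /= ->; rewrite eqxx.
Qed.

Lemma porbit_sub s A x : x \in A -> {in A, forall y, s y \in A} ->
  porbit s x \subset A.
Proof.
move=> xA sA; apply/subsetP => _ /porbitP[j ->].
by elim: j => [|j IH]; rewrite ?expg0 ?perm1 // expgSr permM sA.
Qed.

Lemma porbit_closed s x y : y \in porbit s x -> s y \in porbit s x.
Proof. by case/porbitP => j ->; rewrite -permM -expgSr mem_porbit. Qed.

(* tperm i a * s sends i to a and a to s i: it inserts the fixed point a into
   the cycle of i, right after i. *)
Lemma porbit_tperm_mul s i a x : s a = a -> x != a ->
  porbit (tperm i a * s) x =
    if i \in porbit s x then a |: porbit s x else porbit s x.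
Proof.
move=> sa xa; set t := tperm i a * s.
have ti : t i = a by rewrite permM tpermL.
have ta : t a = s i by rewrite permM tpermR.
have tD y : y != i -> y != a -> t y = s y.
  by move=> yi ya; rewrite permM tpermD // eq_sym.
have a_out : a \notin porbit s x.
  by apply: contra xa; rewrite porbit_sym => /porbitP[j ->]; rewrite permX_fix.
have sub_t : porbit s x \subset porbit t x.
  apply: porbit_sub (porbit_id t x) _ => y.
  have [->|yi] := eqVneq y i => yP; first by rewrite -ta -ti !porbit_closed.
  have [ya|ya] := eqVneq y a; first by rewrite ya sa -ya.
  by rewrite -tD // porbit_closed.
apply/eqP; rewrite eqEsubset; case: ifP => iP.
  have aP : a \in porbit t x by rewrite -ti porbit_closed ?(subsetP sub_t).
  rewrite subUset sub1set aP sub_t !andbT.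
  apply: porbit_sub; first by rewrite setU1r ?porbit_id.
  move=> y /setU1P[->|yP]; first by rewrite ta setU1r ?porbit_closed.
  have [->|yi] := eqVneq y i; first by rewrite ti setU11.
  by rewrite tD ?setU1r ?porbit_closed //; apply: contraNneq a_out => <-.
rewrite sub_t andbT; apply: porbit_sub (porbit_id s x) _ => y yP.
rewrite tD ?porbit_closed //; first by apply: contraTneq yP => ->; rewrite iP.
by apply: contraNneq a_out => <-.
Qed.

End Perm.

Section CyclicMinima.
Variable n : nat.
Implicit Types (s : {perm 'I_n}) (S : {set 'I_n}) (i a x : 'I_n).

Lemma fixed_cycmin s a : s a = a -> a \in cycmin s.
Proof.
by move=> sa; rewrite inE; apply/forall_inP => _ /porbitP[j ->]; rewrite permX_fix.
Qed.

Lemma cycmin1 : cycmin (1 : {perm 'I_n}) = setT.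
Proof. by apply/setP => x; rewrite fixed_cycmin ?inE ?perm1. Qed.

Lemma cycmin_tperm_mul s i a : s a = a -> (i < a)%N ->
  cycmin (tperm i a * s) = cycmin s :\ a.
Proof.
move=> sa ia; apply/setP => x; rewrite !inE.
have [->|xa] /= := eqVneq x a.
  apply/negbTE; apply: contraL ia => /forall_inP/(_ i) ai; rewrite -leqNgt ai //.
  have := mem_porbit (tperm i a * s) 1 i.
  by rewrite expg1 permM tpermL sa porbit_sym.
rewrite porbit_tperm_mul //; case: ifP => // iP.
apply/forall_inP/forall_inP => minx y yP; first exact/minx/setU1r.
by case/setU1P: yP => [->|]; [have := minx i iP; lia | exact: minx].
Qed.

Lemma ncycles_cycmin s : ncycles s = #|cycmin s|.
Proof.
rewrite /ncycles.
have -> : porbits s = porbit s @: cycmin s.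
  apply/setP => X; apply/imsetP/imsetP => [[x _ ->]|[x _ ->]]; last by exists x.
  have [y yP ymin] := arg_minnP val (porbit_id s x).
  have e : porbit s x = porbit s y by apply/eqP; rewrite eq_porbit_mem porbit_sym.
  by exists y; rewrite // inE; apply/forall_inP => z; rewrite -e; apply: ymin.
rewrite card_in_imset // => x y; rewrite !inE => /forall_inP minx /forall_inP miny e.
have yx : y \in porbit s x by rewrite e porbit_id.
have xy : x \in porbit s y by rewrite -e porbit_id.
by apply/val_inj/anti_leq; rewrite minx ?miny.
Qed.

End CyclicMinima.

Section CountByCyclicMinima.
Variable n : nat.
Implicit Types (m : nat) (s : {perm 'I_n}) (S : {set 'I_n}) (i y : 'I_n).

Definition below m : {set 'I_n} := [set y : 'I_n | (y < m)%N].

Definition cycmin_class m S : {set {perm 'I_n}} :=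
  [set s | perm_on (below m) s & cycmin s == S].

Lemma card_below m : (m <= n)%N -> #|below m| = m.
Proof.
move=> mn; rewrite -sum1_card (eq_bigl (fun i : 'I_n => (i < m)%N)) => [|i].
  by rewrite -(big_ord_widen _ (fun=> 1%N) mn) sum1_card card_ord.
by rewrite inE.
Qed.

Lemma cycmin_class_sub m S s : s \in cycmin_class m S -> ~: below m \subset S.
Proof.
rewrite inE => /andP[/perm_onP on /eqP <-]; apply/subsetP => y.
by rewrite in_setC => /on /fixed_cycmin.
Qed.

Lemma cycmin_class0 : cycmin_class 0 setT = [set 1].
Proof.
apply/setP => s; rewrite !inE; apply/andP/eqP => [[on _]|->].
  by apply: perm_on_id on _; rewrite card_below.
by rewrite perm_on1 cycmin1.
Qed.

Lemma card_setD1_cycmin_class a m S : a \notin below m ->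
  #|[set s | perm_on (below m) s & cycmin s :\ a == S]| =
  if a \in S then 0 else #|cycmin_class m (a |: S)|.
Proof.
move=> aout; case: ifP => aS.
  apply/eqP; rewrite cards_eq0; apply/eqP/setP => s; rewrite !inE.
  by apply/negbTE/andP => -[_ /eqP e]; move: aS; rewrite -e setD11.
apply: eq_card => s; rewrite !inE; case on: (perm_on _ s) => //=.
have aC : a \in cycmin s by apply/fixed_cycmin/(out_perm on).
by apply/eqP/eqP => [<-|->]; rewrite ?setD1K ?setU1K ?aS.
Qed.

Section Step.
Variables (m : nat) (mn : (m < n)%N).
Let a : 'I_n := Ordinal mn.

Lemma perm_on_below_succ s i : i \in below m.+1 ->
  perm_on (below m.+1) (tperm i a * s) && ((tperm i a * s)^-1 a == i) =
  perm_on (below m) s.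
Proof.
rewrite inE => im; set t := tperm i a * s.
have tD y : y \notin below m.+1 -> t y = s y.
  by rewrite inE -ltnNge => my; rewrite permM tpermD // -(inj_eq val_inj) /=; lia.
have -> : (t^-1 a == i) = (s a == a).
  by rewrite -(inj_eq (@perm_inj _ t)) permKV permM tpermL eq_sym.
apply/andP/perm_onP => [[/perm_onP on /eqP sa] y | on].
  have [-> //|ya] := eqVneq y a; rewrite inE -ltnNge => my.
  by rewrite -tD ?on // inE -ltnNge; move: ya; rewrite -(inj_eq val_inj) /=; lia.
split; last by rewrite on // inE ltnn.
by apply/perm_onP => y yout; rewrite tD // on //; apply: contra yout; rewrite !inE; lia.
Qed.

Lemma card_cycmin_class_fibre S i : i \in below m.+1 ->
  #|[set s in cycmin_class m.+1 S | s^-1 a == i]| =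
  #|[set s | perm_on (below m) s & cycmin (tperm i a * s) == S]|.
Proof.
move=> iP; have tK := tpermKg i a.
rewrite -(card_imset _ (can_inj tK)) (can2_imset_pre _ tK tK).
apply: eq_card => s; rewrite !inE -(perm_on_below_succ s iP).
by rewrite [RHS]andbAC.
Qed.

Lemma card_cycmin_class_succ S :
  #|cycmin_class m.+1 S| =
  #|cycmin_class m S| + m * #|[set s | perm_on (below m) s & cycmin s :\ a == S]|.
Proof.
have fibre i : i \in below m.+1 ->
    (\sum_(s in cycmin_class m.+1 S | s^-1 a == i) 1)%N =
    #|[set s | perm_on (below m) s & cycmin (tperm i a * s) == S]|.
  move=> iP; rewrite -card_cycmin_class_fibre // -sum1_card.
  by apply: eq_bigl => s; rewrite inE.
rewrite -sum1_card (partition_big (fun s => s^-1 a) (mem (below m.+1))) => [|s].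
  rewrite (bigD1 a) ?inE //= fibre ?inE //; congr (_ + _)%N.
    by apply: eq_card => s; rewrite !inE tperm1 mul1g.
  rewrite -[X in (X * _)%N](card_below (ltnW mn)) -sum_nat_const.
  apply: eq_big => [i | i /andP[iP ia]]; first by rewrite !inE -(inj_eq val_inj) /=; lia.
  rewrite fibre //; apply: eq_card => s; rewrite !inE.
  case on: (perm_on _ s) => //=; rewrite cycmin_tperm_mul //.
    by apply: (out_perm on); rewrite inE ltnn.
  by move: iP ia; rewrite inE -(inj_eq val_inj) /=; lia.
by rewrite inE => /andP[/perm_onV on _]; rewrite /= (perm_closed _ on) inE /=.
Qed.

End Step.

Lemma card_cycmin_class m S : (m <= n)%N -> ~: below m \subset S ->
  #|cycmin_class m S| = (\prod_(y | y \notin S) y)%N.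
Proof.
elim: m S => [|m IH] S mn Sout.
  have -> : S = setT by apply/setP => y; rewrite inE (subsetP Sout) // !inE.
  by rewrite cycmin_class0 cards1 big_pred0 // => y; rewrite inE.
set a : 'I_n := Ordinal mn.
have aout : a \notin below m by rewrite inE ltnn.
have Sout' : ~: below m \subset a |: S.
  apply/subsetP => y; rewrite in_setU1 !inE -ltnNge -(inj_eq val_inj) /= => my.
  by have [//|ym] := eqVneq (y : nat) m; rewrite (subsetP Sout) // !inE -ltnNge; lia.
rewrite card_cycmin_class_succ (card_setD1_cycmin_class S aout).
case: ifP => aS.
  rewrite muln0 addn0 IH ?(ltnW mn) //; apply: subset_trans Sout' _.
  by rewrite subUset sub1set aS subxx.
have -> : #|cycmin_class m S| = 0.
  apply/eqP; rewrite cards_eq0; apply: contraFT aS.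
  by case/set0Pn => s /cycmin_class_sub/subsetP; apply; rewrite in_setC.
rewrite IH ?(ltnW mn) // [in RHS](bigD1 a) ?aS //= add0n.
by congr (_ * _)%N; apply: eq_bigl => y; rewrite in_setU1 negb_or andbC.
Qed.

Lemma card_cycmin_eq S :
  #|[set s : {perm 'I_n} | cycmin s == S]| = (\prod_(y | y \notin S) y)%N.
Proof.
have belowT : below n = setT by apply/setP => y; rewrite !inE ltn_ord.
rewrite -(card_cycmin_class (leqnn n)); last by rewrite belowT setCT sub0set.
apply: eq_card => s; rewrite !inE belowT.
by have -> : perm_on setT s by apply/perm_onP => y; rewrite inE.
Qed.

End CountByCyclicMinima.

Section CentralFactorial.
Local Open Scope ring_scope.
Import GRing.Theory.

Definition squares n : seq int := mkseq (fun i => (i ^ 2)%N%:Z) n.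

Lemma cfu_coef n k : cfu n k = (\prod_(c <- squares n) ('X - c%:P))`_k.
Proof.
elim: n k => [|n IH] k; first by rewrite big_nil coef1; case: k.
rewrite /squares mkseqS -cats1 big_cat big_seq1 /= -/(squares n).
rewrite mulrBr coefB coefMX coefMC.
case: k => [|k] /=; last by rewrite !IH mulrC.
by rewrite -IH; case: n {IH} => [|n] /=; rewrite ?mulr0 ?mul0r subrr.
Qed.

Lemma abs_cfu n k : (k <= n)%N ->
  `|cfu n k|%N = (\sum_(S : {set 'I_n} | #|S| == k) \prod_(i | i \notin S) i ^ 2)%N.
Proof.
move=> kn; rewrite cfu_coef coef_prod_XsubC ?size_mkseq // abszMsign.
rewrite (reindex_inj (@setC_inj _)) /=.
rewrite (eq_bigl (fun S : {set 'I_n} => #|S| == k)) => [|S]; last first.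
  by rewrite -(eqn_add2l #|S|) cardsC card_ord; apply/eqP/eqP; lia.
rewrite (eq_bigr (fun S : {set 'I_n} => (\prod_(i | i \notin S) i ^ 2)%N%:R)) => [|S _].
  by rewrite -(natr_sum int) natz absz_nat.
by rewrite natr_prod; apply: eq_big => [i|i _]; rewrite ?in_setC // nth_mkseq ?natz.
Qed.

End CentralFactorial.

Theorem corollary17 (n k : nat) (hk : (0 < k)%N) (hkn : (k <= n)%N) :
  `|cfu n k|%N =
  #|[set p : {perm 'I_n} * {perm 'I_n} |
      [&& ncycles p.1 == k, ncycles p.2 == k & cycmin p.1 == cycmin p.2]]|.
Proof.
(* The identity also holds for k = 0. *)
rewrite abs_cfu // -sum1_card.
rewrite (partition_big (fun p => cycmin p.1) (fun S => #|S| == k)) => [|p]; last first.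
  by rewrite inE ncycles_cycmin => /and3P[].
apply: eq_bigr => S /eqP Sk.
rewrite big_split /= -card_cycmin_eq -cardsX -sum1_card.
apply: eq_bigl => p; rewrite !inE !ncycles_cycmin.
have [->|] := eqVneq (cycmin p.1) S; last by rewrite andbF.
rewrite Sk eqxx andbT /=.
by have [<-|] := eqVneq S (cycmin p.2); rewrite ?Sk ?eqxx ?andbF.
Qed.
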